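(* Let $M$ be a square-integrable $\{\mathcal F_t\}$-martingale, let $\alpha\in\mathbb N$, and put $N^\alpha_t=M_{T_\alpha\wedge t}-M_{T_{\alpha-1}\wedge t}$. Suppose $g^\alpha\in G^\alpha$ represents $N^\alpha$, i.e. $N^\alpha_t=\int_{]0,t]\times E} g^\alpha(s,x)\,q^\alpha(ds,dx)$ a.s. for all $t$. Define $\tilde g^\alpha(t,x)=I_{\{t\in]T_{\alpha-1},T_\alpha]\}}\,g^\alpha(t,x)$. Then $\tilde g^\alpha$ also represents $N^\alpha$, i.e. $N^\alpha_t=\int_{]0,t]\times E}\tilde g^\alpha(s,x)\,q^\alpha(ds,dx)$ a.s. for all $t$.
   Context: Marked point process setting: $(E,\mathcal E)$ is a Blackwell space. $X$ is a right-constant jump process with values in $E$, with fixed initial position $X_0=\xi_0\in E$; at random times $0<T_1<T_2<\cdots\le\infty$ it jumps to random locations $\xi_1,\xi_2,\dots$ with $\xi_\alpha\neq\xi_{\alpha-1}$. It is assumed that $T_n\to\infty$ almost surely. Put $T_0=0$. The sample space is $\Omega\subset([0,\infty]\times E)^{\mathbb N}$, $\mathcal F=\sigma\{X_s: s<\infty\}$, $P$ is a given probability, and $\mathcal F_t$ is the $P$-completion of $\sigma\{X_s: s\le t\}$. For $\alpha\ge1$ let $\mu^\alpha(\omega;\cdot)$ be a regular conditional distribution of $(T_\alpha,\xi_\alpha)$ given $\mathcal F_{T_{\alpha-1}}$ on $[0,\infty]\times E$; $F^\alpha_t(A)=\mu^\alpha(]t,\infty]\times A)$. Define $p^\alpha(t,A)=I_{\{t\ge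 T_\alpha\}}I_{\{\xi_\alpha\in A\}}$, $\tilde p^\alpha(t,A)=-\int_{]0,t\wedge T_\alpha]}(F^\alpha_{u-}(E))^{-1}\,dF^\alpha_u(A)$, and $q^\alpha=p^\alpha-\tilde p^\alpha$ (a martingale random measure). $G^\alpha$ denotes the set of measurable functions $g^\alpha:\Omega\times[0,\infty]\times E\to\mathbb R$ such that for each $(t,x)$, $g^\alpha(\cdot,t,x)$ is $\mathcal F_{T_{\alpha-1}}$-measurable. *)

From HB Require Import structures.
From mathcomp Require Import all_boot all_order all_algebra.
From mathcomp Require Import all_classical all_reals all_analysis.
From mathcomp Require Import measurable_realfun.
Import Order.TTheory GRing.Theory Num.Theory.

Set Implicit Arguments.
Unset Strict Implicit.
Unset Printing Implicit Defensive.

Local Open Scope classical_set_scope.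
Local Open Scope ring_scope.

Section MarkedPointProcess.
Context {R : realType} {d dE : measure_display}
  {Omega : measurableType d} {E : measurableType dE}.
Variable P : probability Omega R.
Variables (T : nat -> Omega -> \bar R) (xi : nat -> Omega -> E).

Definition mpp_assumptions (x0 : E) : Prop :=
  [/\ (forall w, T 0%N w = 0%E) /\ (forall w, xi 0%N w = x0),
      (forall n w, (T n w < T n.+1 w)%E \/ (T n w = +oo%E /\ T n.+1 w = +oo%E)),
      (forall n w, (T n.+1 w < +oo)%E -> ~ (xi n.+1 w = xi n w)),
      (forall n, measurable_fun setT (T n)) /\ (forall n, measurable_fun setT (xi n))
    & {ae P, forall w, (fun n => T n w) @ \oo --> +oo%E}].

Definition jump_index (s : R) (w : Omega) : nat :=
  xget 0%N [set n | (T n w <= s%:E)%E /\ (s%:E < T n.+1 w)%E].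

Definition Xproc (s : R) (w : Omega) : E := xi (jump_index s w) w.

Definition gen_by_X (I : set R) : set (set Omega) :=
  smallest (sigma_algebra setT)
    [set A | exists s, I s /\ exists2 B, measurable B & A = Xproc s @^-1` B].

Definition Fcal : set (set Omega) := gen_by_X [set s | 0 <= s].

Definition P_completion (G : set (set Omega)) : set (set Omega) :=
  [set A | exists B, G B /\ exists N, Fcal N /\ P N = 0%E /\
      ((A `\` B) `|` (B `\` A)) `<=` N].

Definition Ft (t : R) : set (set Omega) :=
  P_completion (gen_by_X [set s | 0 <= s <= t]).

Definition Finf : set (set Omega) := P_completion Fcal.

Definition Fstop (tau : Omega -> \bar R) : set (set Omega) :=
  [set A | Finf A /\
     forall t, 0 <= t -> Ft t (A `&` [set w | (tau w <= t%:E)%E])].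

Definition meas_wrt (G : set (set Omega)) {d' : measure_display}
  {Y : measurableType d'} (f : Omega -> Y) : Prop :=
  forall B, measurable B -> G (f @^-1` B).

Definition is_rcd (G : set (set Omega)) (Z : Omega -> (\bar R * E)%type)
  (mu : Omega -> probability (\bar R * E)%type R) : Prop :=
  (forall B, measurable B -> @meas_wrt G _ (\bar R) (fun w => mu w B)) /\
  (forall B, measurable B -> forall C, G C ->
      (P (C `&` (Z @^-1` B)) = \int[P]_(w in C) mu w B)%E).

Definition is_martingale (M : R -> Omega -> R) : Prop :=
  [/\ (forall t, 0 <= t -> meas_wrt (Ft t) (M t)),
      (forall t, 0 <= t -> P.-integrable setT (EFin \o M t))
    & (forall s t, 0 <= s -> s <= t -> forall A, Ft s A ->
        (\int[P]_(w in A) (M t w)%:E = \int[P]_(w in A) (M s w)%:E)%E)].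

Definition sq_integrable (M : R -> Omega -> R) : Prop :=
  exists K : R, forall t, 0 <= t ->
    (\int[P]_w ((M t w) ^+ 2)%:E <= K%:E)%E.

Definition Nalpha (M : R -> Omega -> R) (alpha : nat) (t : R) (w : Omega) : R :=
  M (fine (Order.min (T alpha w) t%:E)) w
  - M (fine (Order.min (T alpha.-1 w) t%:E)) w.

Definition in_Galpha (alpha : nat) (g : Omega -> \bar R -> E -> R) : Prop :=
  measurable_fun setT (fun z : (Omega * (\bar R * E))%type => g z.1 z.2.1 z.2.2) /\
  (forall s x, meas_wrt (Fstop (T alpha.-1)) (fun w => g w s x)).

(* int_{]0,t] x E} g(s,x) q^alpha(ds,dx), where q^alpha = p^alpha - p~^alpha,
   p^alpha = point mass at (T_alpha, xi_alpha), and
   p~^alpha(ds,dx) = 1_{]0,T_alpha]}(s) mu(ds,dx) / mu([s,oo] x E)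
   (i.e. -dF_u(A) / F_{u-}(E) with F_u(A) = mu(]u,oo] x A)). *)
Definition q_integral (alpha : nat) (mu : Omega -> probability (\bar R * E)%type R)
  (g : Omega -> \bar R -> E -> R) (t : R) (w : Omega) : \bar R :=
  ((if (T alpha w <= t%:E)%E then g w (T alpha w) (xi alpha w) else 0)%:E
   - \int[mu w]_(y in [set y : (\bar R * E)%type |
                        (0 < y.1)%E /\ (y.1 <= Order.min t%:E (T alpha w))%E])
        (g w y.1 y.2 * (fine (mu w [set z : (\bar R * E)%type | (y.1 <= z.1)%E]))^-1)%:E)%E.

Definition gtilde (alpha : nat) (g : Omega -> \bar R -> E -> R) :
  Omega -> \bar R -> E -> R :=
  fun w s x => if ((T alpha.-1 w < s)%E && (s <= T alpha w)%E) then g w s x else 0.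

End MarkedPointProcess.

(* The integrands [g] and [gtilde g] differ only at times [s <= T_(alpha-1)];
   the jump term does not see this, as T_(alpha-1) < T_alpha whenever T_alpha
   is finite.  So it suffices that, almost surely, the conditional law [mu w]
   of (T_alpha, xi_alpha) given F_(T_(alpha-1)) puts no mass on times
   [s <= T_(alpha-1)(w)].  For a deterministic threshold s this follows from
   the defining identity of [mu] on the events {T_(alpha-1) <= s}.  For the
   random threshold T_(alpha-1)(w) one rounds it up to the grid k/(n+1): the
   resulting bounds have expectation at most
   P(T_alpha < oo, T_alpha <= T_(alpha-1) + 1/(n+1)), which tends to 0 because
   the jump times increase strictly. *)

From HB Require Import structures.
From mathcomp Require Import all_boot all_order all_algebra.
From mathcomp Require Import all_classical all_reals all_analysis.
From mathcomp Require Import measurable_realfun.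
Import Order.TTheory GRing.Theory Num.Theory.

Set Implicit Arguments.
Unset Strict Implicit.
Unset Printing Implicit Defensive.

Local Open Scope classical_set_scope.
Local Open Scope ring_scope.

Section integral_off_null.
Import HBNNSimple.
Local Open Scope ereal_scope.
Context {d : measure_display} {X : measurableType d} {R : realType}.
Variable m : {measure set X -> \bar R}.

(* No measurability of [f] or [g] is needed (the compensator integrand of
   [q_integral] is not known to be measurable): the integral is a supremum of
   simple functions, each of which can be cut off on the null set [N]. *)
Lemma ge0_le_integral_off_null (f g : X -> \bar R) (N : set X) :
  measurable N -> m N = 0 -> (forall x, 0 <= f x) -> (forall x, 0 <= g x) ->
  (forall x, ~ N x -> f x <= g x) -> \int[m]_x f x <= \int[m]_x g x.
Proof.
move=> mN N0 f0 g0 fg; rewrite !ge0_integralTE //.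
apply: ge_ereal_sup => _ [h /= hf <-].
pose h' := proj_nnsfun h (measurableC mN).
have h'E x : h' x = (h x * (x \in ~` N)%:R)%R by rewrite /= mindicE.
have -> : sintegral m h = sintegral m h'.
  have := integral_nnsfun m measurableT h; rewrite patch_setT => <-.
  have := integral_nnsfun m measurableT h'; rewrite patch_setT => <-.
  apply: ae_eq_integral => //.
  - exact/measurable_EFinP/measurable_funPT.
  - exact/measurable_EFinP/measurable_funPT.
  exists N; split => // x /= hx; apply: contrapT => Nx; apply: hx => _.
  by rewrite /= mindicE mem_set // mulr1.
apply: ereal_sup_ubound; exists h' => // x; rewrite h'E.
have [/set_mem Nx|_] := boolP (x \in ~` N); last by rewrite mulr0.
by rewrite mulr1 (le_trans (hf x)) // fg.
Qed.

Lemma integral_setD_null (D N : set X) (f : X -> \bar R) :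
  measurable N -> m N = 0 ->
  \int[m]_(x in D) f x = \int[m]_(x in D `\` N) f x.
Proof.
move=> mN N0.
have ge0_eq (h : X -> \bar R) : (forall x, 0 <= h x) ->
    \int[m]_(x in D) h x = \int[m]_(x in D `\` N) h x.
  move=> h0; rewrite !(integral_mkcond _ h).
  have patch0 A x : 0 <= (h \_ A) x by rewrite patchE; case: ifP.
  have patchD x : ~ N x -> (h \_ D) x = (h \_ (D `\` N)) x.
    by move=> Nx; rewrite !patchE in_setD (memNset Nx) andbT.
  apply/eqP; rewrite eq_le !(ge0_le_integral_off_null mN N0) //;
    by move=> x /patchD ->.
by rewrite integralE [RHS]integralE !ge0_eq // => x; rewrite ?funepos_ge0 ?funeneg_ge0.
Qed.

Lemma ge0_integral_eq0_ae (D : set X) (f : X -> \bar R) : measurable D ->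
  measurable_fun D f -> (forall x, D x -> 0 <= f x) ->
  \int[m]_(x in D) f x = 0 -> {ae m, forall x, D x -> f x = 0}.
Proof.
move=> mD mf f0 i0; apply/(ae_eq_integral_abs _ mD mf).
by rewrite -i0; apply: eq_integral => x /[1!inE] Dx; rewrite gee0_abs // f0.
Qed.

End integral_off_null.

Definition before {R : realType} {E : Type} (z : \bar R) :=
  [set y : (\bar R * E)%type | (y.1 <= z)%E].

Lemma measurable_before {R : realType} {dE : measure_display}
  {E : measurableType dE} (z : \bar R) : measurable (@before R E z).
Proof.
rewrite (_ : before z = `]-oo, z] `*` setT).
  exact: measurableX (emeasurable_itv _) measurableT.
by apply/seteqP; split => -[y1 y2]; rewrite /before /= in_itv //= => -[].
Qed.

Section marked_point_process.
Context {R : realType} {d dE : measure_display}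
  {Omega : measurableType d} {E : measurableType dE}.
Variables (P : probability Omega R) (T : nat -> Omega -> \bar R)
  (xi : nat -> Omega -> E) (x0 : E).
Hypothesis mpp : mpp_assumptions P T xi x0.

Lemma T_leS n w : (T n w <= T n.+1 w)%E.
Proof. by case: mpp => _ /(_ n w) [/ltW|[-> ->]]. Qed.

Lemma T_le n m w : (n <= m)%N -> (T n w <= T m w)%E.
Proof.
move=> /subnK <-; elim: (m - n)%N => [|k IH] //=.
by rewrite addSn (le_trans IH (T_leS _ _)).
Qed.

Lemma T_ge0 n w : (0 <= T n w)%E.
Proof. by case: mpp => -[T0 _] _ _ _ _; rewrite -(T0 w) T_le. Qed.

Lemma T_ltS n w : (T n.+1 w < +oo)%E -> (T n w < T n.+1 w)%E.
Proof. by case: mpp => _ /(_ n w) [//|[_ ->]]; rewrite ltxx. Qed.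

Lemma measurable_T n : measurable_fun setT (T n).
Proof. by case: mpp => _ _ _ []. Qed.

Lemma measurable_xi n : measurable_fun setT (xi n).
Proof. by case: mpp => _ _ _ []. Qed.

Lemma measurable_T_le n (z : \bar R) : measurable [set w | (T n w <= z)%E].
Proof.
have := measurable_T n measurableT (emeasurable_itv `]-oo, z]).
by rewrite setTI; congr measurable; apply/seteqP; split => w /=; rewrite in_itv.
Qed.

Definition between_jumps (s : R) n :=
  [set w | (T n w <= s%:E)%E /\ (s%:E < T n.+1 w)%E].

Lemma between_jumps_uniq s w n m :
  between_jumps s n w -> between_jumps s m w -> n = m.
Proof.
wlog nm : n m / (n <= m)%N.
  by move=> H hn hm; case: (leqP n m) => [/H|/ltnW /H]; [exact|move=> /(_ hm hn)].
move=> [_ Tn] [Tm _]; apply/eqP; rewrite eqn_leq nm leqNgt; apply/negP => ltnm.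
by have := le_lt_trans (le_trans (T_le w ltnm) Tm) Tn; rewrite ltxx.
Qed.

Lemma measurable_between_jumps s n : measurable (between_jumps s n).
Proof.
have -> : between_jumps s n =
    [set w | (T n w <= s%:E)%E] `&` ~` [set w | (T n.+1 w <= s%:E)%E].
  by rewrite /between_jumps; apply/seteqP; split => w /= [Tn]; rewrite ltNge => /negP.
by apply: measurableI; [|apply: measurableC]; exact: measurable_T_le.
Qed.

Lemma measurable_Xproc s : measurable_fun setT (Xproc T xi s).
Proof.
move=> _ B mB; rewrite setTI.
have xiB n : measurable (xi n @^-1` B).
  by rewrite -[X in measurable X]setTI; exact: measurable_xi.
have -> : Xproc T xi s @^-1` B =
    \bigcup_n (between_jumps s n `&` xi n @^-1` B) `|`
    (~` (\bigcup_n between_jumps s n) `&` xi 0%N @^-1` B).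
  apply/seteqP; split => w /=; rewrite /Xproc /jump_index.
  - case: xgetP => [n _ Sn Bx|NS Bx]; first by left; exists n.
    by right; split => // -[n _ /NS].
  - case=> [[n _ [Sn Bn]]|[NS B0]]; last first.
      by rewrite xgetPN // => n Sn; apply: NS; exists n.
    rewrite (@xget_unique _ 0%N (between_jumps s ^~ w) n Sn) // => k Sk.
    exact: between_jumps_uniq Sk Sn.
have mS : measurable (\bigcup_n between_jumps s n).
  by apply: bigcup_measurable => n _; exact: measurable_between_jumps.
apply: measurableU; last exact: measurableI _ _ (measurableC mS) (xiB 0%N).
apply: bigcup_measurable => n _.
exact: measurableI _ _ (measurable_between_jumps s n) (xiB n).
Qed.


Hypothesis Pcomplete : measure_is_complete P.

Lemma gen_by_X_measurable I : gen_by_X T xi I `<=` measurable.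
Proof.
move=> A; apply; split; first exact: sigma_algebra_measurable.
move=> _ [s [_ [B mB ->]]].
by rewrite -[X in measurable X]setTI; exact: measurable_Xproc.
Qed.

Lemma gen_by_X_sub I J : I `<=` J -> gen_by_X T xi I `<=` gen_by_X T xi J.
Proof.
move=> IJ A GA G [sG XG]; apply: GA; split => // B [s [Is XsB]].
by apply: XG; exists s; split => //; exact: IJ.
Qed.

Lemma P_completion_sub G1 G2 :
  G1 `<=` G2 -> P_completion P T xi G1 `<=` P_completion P T xi G2.
Proof. by move=> G12 A [B [/G12 G2B nullAB]]; exists B. Qed.

Lemma P_completion_measurable G :
  G `<=` measurable -> P_completion P T xi G `<=` measurable.
Proof.
move=> Gm A [B [GB [N [FN [PN ABN]]]]].
have mN : measurable N := gen_by_X_measurable FN.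
have -> : A = (B `\` N) `|` (A `&` N).
  apply/seteqP; split => x.
  - move=> Ax; have [Nx|Nx] := pselect (N x); first by right.
    by left; split => //; apply: contrapT => Bx; apply: Nx; apply: ABN; left.
  - by case=> [[Bx Nx]|[]//]; apply: contrapT => Ax; apply: Nx; apply: ABN; right.
apply: measurableU; first exact: measurableD (Gm _ GB) mN.
by apply: Pcomplete; exists N; split => //; exact: subIsetr.
Qed.

Lemma Fstop_measurable tau : Fstop P T xi tau `<=` measurable.
Proof. by move=> A [/(P_completion_measurable (@gen_by_X_measurable _))]. Qed.

Lemma Ft_le s t : s <= t -> Ft P T xi s `<=` Ft P T xi t.
Proof.
move=> st; apply: P_completion_sub; apply: gen_by_X_sub => u /= /andP[u0 us].
by rewrite u0 (le_trans us st).
Qed.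

Lemma Ft_Finf t : Ft P T xi t `<=` Finf P T xi.
Proof. by apply: P_completion_sub; apply: gen_by_X_sub => u /= /andP[]. Qed.

Section regular_conditional_distribution.
Variables (a : nat) (mu : Omega -> probability (\bar R * E)%type R).
Let Z w := (T a.+1 w, xi a.+1 w).
Hypothesis rcd : is_rcd P (Fstop P T xi (T a)) Z mu.

Lemma measurable_Z : measurable_fun setT Z.
Proof. exact: measurable_fun_pair (measurable_T _) (measurable_xi _). Qed.

Lemma measurable_mu B : measurable B -> measurable_fun setT (fun w => mu w B).
Proof.
move=> mB _ V mV; apply: measurableI => //.
by apply: Fstop_measurable; case: rcd => + _; exact.
Qed.

(* [mu w setT] is constant, so its preimages of [setT] and [set0] are
   [Fstop]-measurable. *)
Lemma Fstop_setT : Fstop P T xi (T a) setT.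
Proof.
by case: rcd => /(_ setT measurableT setT measurableT); rewrite preimage_setT.
Qed.

Lemma Fstop_set0 : Fstop P T xi (T a) set0.
Proof.
by case: rcd => /(_ setT measurableT set0 measurable0); rewrite preimage_set0.
Qed.

Lemma Fstop_T_le s : 0 <= s -> Fstop P T xi (T a) [set w | (T a w <= s%:E)%E].
Proof.
move=> s0; have [_ Ta] := Fstop_setT; split.
  by apply: (@Ft_Finf s); move: (Ta s s0); rewrite setTI.
move=> t t0; have := Ta (Num.min s t); rewrite le_min s0 t0 setTI => /(_ isT).
rewrite (_ : [set w | _] `&` _ = [set w | (T a w <= (Num.min s t)%:E)%E]).
  by apply: Ft_le; rewrite ge_min lexx orbT.
apply/seteqP; split => w /=; rewrite EFin_min le_min.
- by move=> [-> ->].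
- by move=> /andP[].
Qed.

Lemma rcd_integral_setD C1 C2 B :
  Fstop P T xi (T a) C1 -> Fstop P T xi (T a) C2 -> C1 `<=` C2 -> measurable B ->
  (\int[P]_(w in C2 `\` C1) mu w B = P ((C2 `\` C1) `&` (Z @^-1` B)))%E.
Proof.
move=> FC1 FC2 C12 mB.
have mC1 := Fstop_measurable FC1; have mC2 := Fstop_measurable FC2.
have mZB : measurable (Z @^-1` B).
  by rewrite -[X in measurable X]setTI; exact: measurable_Z.
have [_ /(_ B mB) rcdB] := rcd.
have := rcdB C2 FC2; rewrite -{1 2}(setDUK C12) setIUl measureU; first last.
- by apply/seteqP; split => w // [[? _] [[_ ?] _]].
- exact: measurableI _ _ (measurableD mC2 mC1) mZB.
- exact: measurableI _ _ mC1 mZB.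
rewrite ge0_integral_setU //; first last.
- by rewrite disj_set2E; apply/eqP/seteqP; split => w // [? []].
- exact: measurable_funS (measurable_mu mB).
- exact: measurableD.
have finC1 : P (C1 `&` Z @^-1` B) \is a fin_num.
  rewrite ge0_fin_numE ?measure_ge0 // (le_lt_trans (probability_le1 _ _)) ?ltey //.
  exact: measurableI.
rewrite -(rcdB C1 FC1) => /(congr1 (fun z => z - P (C1 `&` Z @^-1` B))%E).
by rewrite !(addeC (P (C1 `&` _))) !addeK // => ->.
Qed.

Lemma ae_mu_before_lt_T s : 0 <= s ->
  {ae P, forall w, (s%:E < T a w)%E -> mu w (before s%:E) = 0%E}.
Proof.
move=> s0; have mTs := measurable_T_le a s%:E.
have := rcd_integral_setD (Fstop_T_le s0) Fstop_setT (@subsetT _ _)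
  (measurable_before s%:E).
rewrite (_ : _ `&` _ = set0) ?measure0; last first.
  apply/seteqP; split => w // [[_ /= Tas] Ta1s]; apply: Tas.
  exact: le_trans (T_leS a w) Ta1s.
move/(ge0_integral_eq0_ae (measurableD measurableT mTs)
  (measurable_funS measurableT (@subsetT _ _) (measurable_mu (measurable_before _)))
  (fun w _ => measure_ge0 _ _)).
by apply: filterS => w mu0 sT; apply: mu0; split => //=; rewrite leNgt sT.
Qed.

Section grid.
Variable n : nat.

Definition grid k : R := k%:R / n.+1%:R.

Lemma grid_ge0 k : 0 <= grid k.
Proof. by rewrite divr_ge0. Qed.

Lemma gridS k : grid k.+1 = grid k + n.+1%:R^-1.
Proof. by rewrite /grid -addn1 natrD mulrDl mul1r. Qed.

Lemma grid_le i j : (i <= j)%N -> grid i <= grid j.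
Proof. by move=> ij; rewrite ler_wpM2r ?invr_ge0 // ler_nat. Qed.

Definition T_le_grid k := [set w | (T a w <= (grid k)%:E)%E].

Definition grid_cell k :=
  T_le_grid k `\` (if k is k'.+1 then T_le_grid k' else set0).

Lemma measurable_grid_cell k : measurable (grid_cell k).
Proof.
apply: measurableD; first exact: measurable_T_le.
by case: k => [|k] //=; exact: measurable_T_le.
Qed.

Lemma grid_cell_uniq i j w : grid_cell i w -> grid_cell j w -> i = j.
Proof.
wlog ij : i j / (i <= j)%N.
  by move=> H hi hj; case: (leqP i j) => [/H|/ltnW /H]; [exact|move=> /(_ hj hi)].
move=> [Ti _] [_ Tj]; apply/eqP; rewrite eqn_leq ij leqNgt; apply/negP.
case: j Tj {ij} => [//|j] Tj ij; apply: Tj.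
by apply: (le_trans Ti); rewrite lee_fin grid_le.
Qed.

Let grid_event k := grid_cell k `&` (Z @^-1` before (grid k)%:E).

Lemma integral_grid_cell k :
  (\int[P]_(w in grid_cell k) mu w (before (grid k)%:E) = P (grid_event k))%E.
Proof.
apply: rcd_integral_setD; last exact: measurable_before.
- by case: k => [|k]; [exact: Fstop_set0|exact: Fstop_T_le (grid_ge0 k)].
- exact: Fstop_T_le (grid_ge0 k).
- case: k => [|k] //= w /= Tk; apply: (le_trans Tk).
  by rewrite lee_fin grid_le.
Qed.

Definition grid_term k := (fun w => mu w (before (grid k)%:E)) \_ (grid_cell k).

Lemma grid_term_ge0 k w : (0 <= grid_term k w)%E.
Proof. by rewrite /grid_term patchE; case: ifPn => // _; exact: measure_ge0. Qed.

Lemma measurable_grid_term k : measurable_fun setT (grid_term k).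
Proof.
apply/(measurable_restrictT _ (measurable_grid_cell k)).
exact: measurable_funS (measurable_mu (measurable_before _)).
Qed.

Definition grid_mass w := (\sum_(k <oo) grid_term k w)%E.

Lemma measurable_grid_mass : measurable_fun setT grid_mass.
Proof.
by apply: ge0_emeasurable_sum => [k w _ _|k _];
  [exact: grid_term_ge0|exact: measurable_grid_term].
Qed.

Definition quick_jump :=
  [set w | (T a.+1 w < +oo)%E /\ (T a.+1 w <= T a w + (n.+1%:R^-1)%:E)%E].

Lemma measurable_quick_jump : measurable quick_jump.
Proof.
have mTa1 := measurable_T a.+1.
have mTa := emeasurable_funD (measurable_T a) (measurable_cst (n.+1%:R^-1)%:E).
have := measurableI _ _ (measurable_lte measurableT mTa1 (measurable_cst +oo%E))
                    (measurable_lee measurableT mTa1 mTa).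
by rewrite !setTI.
Qed.

Lemma grid_event_quick_jump k : grid_event k `<=` quick_jump.
Proof.
move=> w [[Tk Tprev] Ta1k]; rewrite /before /= in Ta1k.
split; first exact: le_lt_trans Ta1k (ltey _).
apply: (le_trans Ta1k); case: k Tk Tprev {Ta1k} => [|k] _ /= Tprev.
  by rewrite /grid mul0r adde_ge0 ?T_ge0 // lee_fin invr_ge0.
by rewrite gridS EFinD leeD2r // ltW // ltNge; apply/negP.
Qed.

Lemma integral_grid_mass_le : (\int[P]_w grid_mass w <= P quick_jump)%E.
Proof.
rewrite integral_nneseries //; first last.
- by move=> k w _; exact: grid_term_ge0.
- exact: measurable_grid_term.
under eq_eseriesr do rewrite /grid_term -integral_mkcond integral_grid_cell.
have mE k : measurable (grid_event k).
  apply: measurableI _ _ (measurable_grid_cell k) _.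
  by rewrite -[X in measurable X]setTI; exact: measurable_Z (measurable_before _).
have tE : trivIset setT grid_event.
  by move=> i j _ _ [w [[ci _] [cj _]]]; exact: grid_cell_uniq ci cj.
have <- : P (\bigcup_k grid_event k) = (\sum_(k <oo) P (grid_event k))%E.
  rewrite (measure_bigcup P setT grid_event (fun k _ => mE k) tE).
  by apply: eq_eseriesl => k; rewrite in_setT.
apply: le_measure; rewrite ?inE; first exact: bigcup_measurable.
- exact: measurable_quick_jump.
- by move=> w [k _ /grid_event_quick_jump].
Qed.

Lemma mu_before_T_le_grid_mass w :
  (T a w < +oo)%E -> (mu w (before (T a w)) <= grid_mass w)%E.
Proof.
move=> Tfin.
have [k Tk kmin] : exists2 k, (T a w <= (grid k)%:E)%E &
    forall j, (T a w <= (grid j)%:E)%E -> (k <= j)%N.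
  have ex : exists k, (T a w <= (grid k)%:E)%E.
    exists (Num.truncn (fine (T a w) * n.+1%:R)).+1.
    rewrite -(@fineK _ (T a w)) ?ge0_fin_numE ?T_ge0 // lee_fin.
    by rewrite /grid ler_pdivlMr ?ltr0Sn // ltW // truncnS_gt.
  by case: (ex_minnP ex) => k; exists k.
have cell_k : grid_cell k w.
  split => //; case: k Tk kmin => [|k] Tk kmin //= /kmin.
  by rewrite ltnn.
apply: (@le_trans _ _ (grid_term k w)).
  rewrite /grid_term patchE mem_set //.
  apply: le_measure; rewrite ?inE; try exact: measurable_before.
  by move=> y; rewrite /before /= => /le_trans; apply.
rewrite /grid_mass.
apply: le_trans (nneseries_lim_ge k.+1 (fun j _ _ => grid_term_ge0 j w)).
by rewrite big_nat_recr //= leeDr // sume_ge0 // => j _; exact: grid_term_ge0.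
Qed.

End grid.

Lemma quick_jump_cvg0 : (P \o quick_jump) @ \oo --> 0%E.
Proof.
rewrite -(measure0 P) -(_ : \bigcap_n quick_jump n = set0); last first.
  apply/seteqP; split => w // qj; have [Ta1fin _] := qj 0%N I.
  suff : (T a.+1 w <= T a w)%E by rewrite leNgt T_ltS.
  apply/lee_addgt0Pr => e e0.
  have [N _ /(_ N (leqnn N)) Ne] := near_infty_natSinv_lt (PosNum e0).
  have [_ /le_trans] := qj N I; apply; rewrite leeD2l // lee_fin.
  exact: ltW.
apply: nonincreasing_cvg_mu.
- by rewrite (le_lt_trans (probability_le1 _ _)) ?ltey //; exact: measurable_quick_jump.
- exact: measurable_quick_jump.
- exact: bigcapT_measurable measurable_quick_jump.
apply/nonincreasing_seqP => k; apply/subsetPset => w [Ta1fin Ta1k]; split => //.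
apply: (le_trans Ta1k); rewrite leeD2l // lee_fin.
by rewrite lef_pV2 ?posrE ?ltr0Sn // ler_nat.
Qed.

Lemma ae_mu_before_T :
  {ae P, forall w, (T a w < +oo)%E -> mu w (before (T a w)) = 0%E}.
Proof.
pose psi w := einfs (grid_mass ^~ w) 0%N.
have mpsi : measurable_fun setT psi.
  exact: measurable_fun_einfs (fun n => measurable_grid_mass n) 0%N.
have psi_le n w : (psi w <= grid_mass n w)%E by apply: ereal_inf_lbound; exists n.
have psi_ge0 w : (0 <= psi w)%E.
  apply/ereal_infP => _ [k _ <-].
  by apply: nneseries_ge0 => j _ _; exact: grid_term_ge0.
have int_psi : (\int[P]_w psi w = 0)%E.
  apply/eqP; rewrite eq_le integral_ge0 ?andbT // -(cvg_lim _ quick_jump_cvg0) //.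
  apply: lime_ge; first by apply/cvg_ex; exists 0%E; exact: quick_jump_cvg0.
  apply: nearW => n /=; apply: le_trans (integral_grid_mass_le n).
  by apply: ge0_le_integral => //; exact: measurable_grid_mass.
have := ge0_integral_eq0_ae measurableT mpsi (fun w _ => psi_ge0 w) int_psi.
apply: filterS => w /(_ I) psi0 Tfin; apply/eqP; rewrite eq_le measure_ge0 andbT -psi0.
by apply/ereal_infP => _ [k _ <-]; exact: mu_before_T_le_grid_mass.
Qed.

Lemma q_integral_gtilde (g : Omega -> \bar R -> E -> R) t : 0 <= t ->
  {ae P, forall w, q_integral T xi a.+1 mu g t w =
                   q_integral T xi a.+1 mu (gtilde T a.+1 g) t w}.
Proof.
move=> t0; have := ae_mu_before_lt_T t0; have := ae_mu_before_T.
apply: filterS2 => w muT0 mut0; rewrite /q_integral /gtilde /=.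
congr (_ - _)%E.
  case: ifPn => // Ta1t; rewrite lexx andbT T_ltS //.
  exact: le_lt_trans Ta1t (ltey _).
pose N := @before R E (T a w) `&` before t%:E.
have mN : measurable N := measurableI _ _ (measurable_before _) (measurable_before _).
have muN0 : mu w N = 0%E.
  apply/eqP; rewrite eq_le measure_ge0 andbT.
  have [Tafin|] := boolP (T a w < +oo)%E.
    rewrite -(muT0 Tafin) le_measure ?inE //; last exact: subIsetl.
    exact: measurable_before.
  rewrite ltey negbK => /eqP Tainf.
  rewrite -(mut0 _) ?Tainf ?ltey // le_measure ?inE //; last exact: subIsetr.
  exact: measurable_before.
rewrite (integral_setD_null _ _ mN muN0) [RHS](integral_setD_null _ _ mN muN0).
apply: eq_integral => y /set_mem[[y0]].
rewrite le_min => /andP[yt yTa1] yN.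
suff -> : (T a w < y.1)%E by rewrite yTa1.
by rewrite ltNge; apply/negP => yTa; apply: yN.
Qed.

End regular_conditional_distribution.

End marked_point_process.

Theorem mainTheorem2 (R : realType) (d dE : measure_display)
  (Omega : measurableType d) (E : measurableType dE)
  (P : probability Omega R)
  (T : nat -> Omega -> \bar R) (xi : nat -> Omega -> E) (x0 : E)
  (M : R -> Omega -> R) (alpha : nat)
  (mu : Omega -> probability (\bar R * E)%type R)
  (g : Omega -> \bar R -> E -> R) :
  measure_is_complete P ->
  mpp_assumptions P T xi x0 ->
  is_martingale P T xi M ->
  sq_integrable P M ->
  (0 < alpha)%N ->
  is_rcd P (Fstop P T xi (T alpha.-1)) (fun w => (T alpha w, xi alpha w)) mu ->
  in_Galpha P T xi alpha g ->
  (forall t, 0 <= t ->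
     {ae P, forall w, (Nalpha T M alpha t w)%:E = q_integral T xi alpha mu g t w}) ->
  forall t, 0 <= t ->
     {ae P, forall w,
        (Nalpha T M alpha t w)%:E = q_integral T xi alpha mu (gtilde T alpha g) t w}.
Proof.
move=> Pcomplete mpp _ _ alpha_gt0 rcd _ Nrepr t t0.
case: alpha alpha_gt0 rcd Nrepr => [//|a] _ rcd Nrepr.
apply: filterS2 (Nrepr t t0) (q_integral_gtilde mpp Pcomplete rcd g t0).
by move=> w -> ->.
Qed.
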